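(* There is $d_0$ such that the following holds for all $d\geq d_0$. Let $G$ be a graph on $n$ vertices with average degree $d$. Then there exists a non-empty bipartite subgraph $G'$ of $G$ with parts $X$ and $Y$ such that $e(G')\geq|X|\cdot\frac{\Delta(G')}{80}$ and $e(G')\geq|Y|\cdot\frac{d}{10\log n}$.
   Context: $e(G')$ is the number of edges and $\Delta(G')$ the maximum degree of $G'$. Logarithms are base $2$. *)

From mathcomp Require Import all_boot.
From Stdlib Require Import Reals.
Set Implicit Arguments. Unset Strict Implicit. Unset Printing Implicit Defensive.

Definition simple_graph (T : finType) (e : rel T) : Prop :=
  (forall x y, e x y = e y x) /\ (forall x, ~~ e x x).

(* Number of ordered adjacent pairs = 2 e(G). *)
Definition n_arcs (T : finType) (e : rel T) : nat :=
  #|[set p : T * T | e p.1 p.2]|.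

Definition avg_degree (T : finType) (e : rel T) : R :=
  (INR (n_arcs e) / INR #|T|)%R.

(* A bipartite subgraph G' of G with parts X, Y: X, Y disjoint vertex sets,
   edge set F given as pairs (x, y) with x in X, y in Y and xy an edge of G.
   The vertex set of G' is X :|: Y. *)
Definition bip_subgraph (T : finType) (e : rel T) (X Y : {set T})
  (F : {set T * T}) : Prop :=
  [disjoint X & Y] /\
  (forall p, p \in F -> [/\ p.1 \in X, p.2 \in Y & e p.1 p.2]).

Definition bip_edges (T : finType) (F : {set T * T}) : nat := #|F|.

Definition bip_deg (T : finType) (F : {set T * T}) (v : T) : nat :=
  #|[set y | (v, y) \in F]| + #|[set x | (x, v) \in F]|.

Definition bip_maxdeg (T : finType) (F : {set T * T}) : nat :=
  \max_(v : T) bip_deg F v.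

Definition log2 (x : R) : R := (ln x / ln 2)%R.

From mathcomp Require Import all_boot zify.
Set Implicit Arguments. Unset Strict Implicit. Unset Printing Implicit Defensive.

(* Sort the vertices into dyadic degree classes cls x = floor(log2 deg x) and
   orient every edge towards the endpoint of not larger class ("down" arcs);
   at least half of the 2e(G) arcs are down arcs.  Averaging over all vertex
   subsets A (each ordered pair x != y is split as x in A, y notin A by a
   quarter of them) yields an A whose down arcs leaving A are many compared
   with the volume of A.  Discarding the vertices of A sending out less than a
   1/40 fraction of their degree, and pigeonholing over the log n + 1 degree
   classes, gives one class i whose "good" vertices X send many down arcs to
   Y = {y notin A | cls y <= i}.  All vertices of X and Y have degree below
   2^(i+1), while every x in X sends at least 2^i / 40 edges into Y; this is
   the first inequality, and the pigeonhole bound is the second. *)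

Section SubsetAverages.
Variable T : finType.
Implicit Types (A : {set T}) (x y : T).

Definition toggle x A : {set T} := if x \in A then A :\ x else x |: A.

Lemma in_toggle x z A :
  (z \in toggle x A) = (if z == x then x \notin A else z \in A).
Proof.
rewrite /toggle; case: (eqVneq z x) => [->|nzx].
  by case: (x \in A); rewrite ?setD11 ?setU11.
by case: (x \in A); rewrite ?in_setD1 ?in_setU1 (negPf nzx).
Qed.

Lemma toggleK x : involutive (toggle x).
Proof.
move=> A; apply/setP => z; rewrite !in_toggle.
by case: (eqVneq z x) => [->|//]; rewrite eqxx negbK.
Qed.

Lemma sum_toggle x (F : {set T} -> nat) :
  \sum_(A : {set T}) F (toggle x A) = \sum_(A : {set T}) F A.
Proof. by rewrite [RHS](reindex_inj (inv_inj (toggleK x))). Qed.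

Lemma sum_setC (F : {set T} -> nat) :
  \sum_(A : {set T}) F (~: A) = \sum_(A : {set T}) F A.
Proof. by rewrite [RHS](reindex_inj (inv_inj (@setCK T))). Qed.

(* A fixed pair x != y is separated (x in A, y notin A) by exactly a quarter
   of all subsets A: toggling x or y permutes the four membership patterns. *)
Lemma count_sep x y : x != y ->
  4 * \sum_(A : {set T}) ((x \in A) && (y \notin A)) = #|{set T}|.
Proof.
move=> nxy.
pose c b1 b2 := \sum_(A : {set T}) (((x \in A) == b1) && ((y \in A) == b2)).
have cx b1 b2 : c b1 b2 = c (~~ b1) b2.
  rewrite /c -(sum_toggle x); apply: eq_bigr => A _.
  rewrite !in_toggle eqxx [y == x]eq_sym (negPf nxy).
  by case: (x \in A); case: b1.
have cy b1 b2 : c b1 b2 = c b1 (~~ b2).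
  rewrite /c -(sum_toggle y); apply: eq_bigr => A _.
  by rewrite !in_toggle eqxx (negPf nxy); case: (y \in A); case: b2.
have total :
    c true true + c true false + c false true + c false false = #|{set T}|.
  rewrite -sum1_card /c -!big_split; apply: eq_bigr => A _.
  by case: (x \in A); case: (y \in A).
have -> : \sum_(A : {set T}) ((x \in A) && (y \notin A)) = c true false.
  by apply: eq_bigr => A _; case: (x \in A); case: (y \in A).
have ctt : c true true = c true false by rewrite cy.
have cft : c false true = c true false by rewrite cx ctt.
have cff : c false false = c true false by rewrite cx.
by rewrite -total ctt cft cff; lia.
Qed.

(* Each vertex lies in half of all subsets: summing a vertex weight over all
   subsets A gives 2^n / 2 times the total weight. *)
Lemma sum_subsets_mass (w : T -> nat) :
  2 * \sum_(A : {set T}) \sum_(x in A) w x = #|{set T}| * \sum_x w x.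
Proof.
have compl : \sum_(A : {set T}) \sum_(x in A) w x
             = \sum_(A : {set T}) \sum_(x in ~: A) w x.
  exact: esym (sum_setC (fun A => \sum_(x in A) w x)).
rewrite mul2n -addnn {2}compl -big_split /=.
rewrite -sum_nat_const; apply: eq_bigr => A _.
rewrite [in RHS](bigID (mem A)) /=; congr (_ + _); apply: eq_bigl => x.
by rewrite inE.
Qed.

Lemma sum_subsets_cut (r : rel T) : irreflexive r ->
  4 * \sum_(A : {set T}) \sum_(x in A) \sum_(y | y \notin A) r x y
    = #|{set T}| * \sum_x \sum_y r x y.
Proof.
move=> r_irr.
have indicator A : \sum_(x in A) \sum_(y | y \notin A) r x y
    = \sum_x \sum_y ((x \in A) && (y \notin A)) * r x y.
  rewrite big_mkcond; apply: eq_bigr => x _; case: (x \in A) => /=.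
    rewrite big_mkcond; apply: eq_bigr => y _.
    by case: (y \in A); rewrite /= ?mul1n.
  by rewrite big1.
rewrite (eq_bigr _ (fun A _ => indicator A)) exchange_big.
rewrite big_distrr [RHS]big_distrr /=; apply: eq_bigr => x _.
rewrite exchange_big big_distrr [RHS]big_distrr /=.
apply: eq_bigr => y _; rewrite -big_distrl /= mulnA.
case: (eqVneq x y) => [<-|nxy]; first by rewrite r_irr !muln0.
by rewrite count_sep.
Qed.
End SubsetAverages.

Lemma exists_le_of_sum_le (I : finType) (a b : I -> nat) :
  0 < #|I| -> \sum_i a i <= \sum_i b i -> exists i, a i <= b i.
Proof.
move=> I_gt0 sum_le; apply/existsP; apply: contraLR sum_le.
move=> /existsPn a_gt_b; rewrite -ltnNge.
have lt_ba i : (b i).+1 <= a i by rewrite ltnNge a_gt_b.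
have sum_lt : \sum_i (b i + 1) <= \sum_i a i.
  by apply: leq_sum => i _; rewrite addn1; exact: lt_ba.
apply: leq_trans sum_lt.
by rewrite big_split /= sum_nat_const muln1 -addn1 leq_add2l.
Qed.

Lemma card_set_sum (T : finType) (P : pred T) : #|[set x | P x]| = \sum_x P x.
Proof.
by rewrite -sum1dep_card big_mkcond; apply: eq_bigr => x _; case: (P x).
Qed.

Section DyadicSplitting.
Variables (T : finType) (e : rel T).
Hypotheses (e_sym : forall x y, e x y = e y x) (e_irr : forall x, ~~ e x x).
Implicit Types (A X Y : {set T}) (F : {set T * T}) (x y v : T) (i : nat).

Definition deg x : nat := \sum_y e x y.

Lemma degE x : deg x = #|[set y | e x y]|.
Proof. by rewrite card_set_sum. Qed.

Lemma n_arcsE : n_arcs e = \sum_x deg x.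
Proof.
by rewrite /n_arcs card_set_sum (pair_bigA _ (fun x y => (e x y : nat))).
Qed.

Definition cls x : nat := trunc_log 2 (deg x).

Definition down x y : bool := e x y && (cls y <= cls x).

(* Every edge goes down in at least one direction. *)
Lemma n_arcs_down : n_arcs e <= 2 * \sum_x \sum_y down x y.
Proof.
rewrite n_arcsE /deg mul2n -addnn [X in _ <= _ + X]exchange_big -big_split /=.
apply: leq_sum => x _; rewrite -big_split /=; apply: leq_sum => y _.
rewrite /down (e_sym y x); case: (e x y) => //=.
by case: (leqP (cls y) (cls x)) => // /ltnW ->.
Qed.

Definition outdeg A x : nat := \sum_(y | y \notin A) down x y.
Definition cut A : nat := \sum_(x in A) outdeg A x.
Definition vol A : nat := \sum_(x in A) deg x.

Lemma outdeg_le_deg A x : outdeg A x <= deg x.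
Proof.
rewrite /outdeg /deg [X in _ <= X](bigID (mem A)) /= addnC.
apply: leq_trans (leq_addr _ _); apply: leq_sum => y _.
by rewrite /down; case: (e x y) => //=; exact: leq_b1.
Qed.

(* Averaging over all A: the average cut is a quarter of the down arcs,
   hence at least 2e(G)/8, while the average volume is 2e(G)/2. *)
Lemma exists_heavy_cut : exists A, 2 * vol A + 9 * n_arcs e <= 80 * cut A.
Proof.
have sets_gt0 : 0 < #|{set T}| by apply/card_gt0P; exists set0.
apply: exists_le_of_sum_le => //.
rewrite big_split /= -big_distrr -[X in _ <= X]big_distrr /= sum_nat_const.
rewrite -/#|{set T}|.
have down_irr : irreflexive down by move=> x; rewrite /down (negbTE (e_irr x)).
have := sum_subsets_cut down_irr; have := sum_subsets_mass deg.
rewrite -n_arcsE /cut /vol /outdeg => -> cut_sum.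
rewrite (_ : 80 = 20 * 4) // -mulnA cut_sum.
have := n_arcs_down; rewrite -(leq_pmul2l sets_gt0).
nia.
Qed.

(* A vertex of A is good when at least 1/40 of its edges are down arcs
   leaving A; the others account for at most 2 vol A / 80 of the cut. *)
Definition good A x : bool := (0 < deg x) && (deg x <= 40 * outdeg A x).

Lemma good_part_heavy A : 2 * vol A + 9 * n_arcs e <= 80 * cut A ->
  9 * n_arcs e <= 80 * \sum_(x in A | good A x) outdeg A x.
Proof.
have bad_small : 80 * \sum_(x in A | ~~ good A x) outdeg A x <= 2 * vol A.
  rewrite /vol !big_distrr /= [X in _ <= X](bigID (good A)) /=.
  apply: leq_trans (leq_addl _ _); apply: leq_sum => x /andP [_].
  rewrite /good negb_and -leqNgt -ltnNge; have := outdeg_le_deg A x; lia.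
rewrite /cut (bigID (good A)) /=; lia.
Qed.

(* Degrees are below n, so all classes lie in [0, log2 n]. *)
Definition max_cls : nat := trunc_log 2 #|T|.

Lemma cls_lt x : cls x < max_cls.+1.
Proof. by rewrite ltnS leq_trunc_log // degE max_card. Qed.

Definition layer A i : {set T} := [set x in A | good A x && (cls x == i)].
Definition weight A i : nat := \sum_(x in layer A i) outdeg A x.

Lemma good_sum_layers A :
  \sum_(x in A | good A x) outdeg A x = \sum_(i < max_cls.+1) weight A i.
Proof.
rewrite (partition_big (fun x => Ordinal (cls_lt x)) xpredT) //=.
apply: eq_bigr => i _; apply: eq_bigl => x.
by rewrite !inE andbA.
Qed.

Lemma exists_rich_layer A :
  9 * n_arcs e <= 80 * \sum_(x in A | good A x) outdeg A x ->
  exists i : 'I_max_cls.+1, 9 * n_arcs e <= 80 * max_cls.+1 * weight A i.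
Proof.
rewrite good_sum_layers => heavy.
apply: exists_le_of_sum_le; first by rewrite card_ord.
rewrite sum_nat_const card_ord -big_distrr /= mulnAC mulnC leq_mul2r.
by rewrite heavy orbT.
Qed.

Definition cross X Y : {set T * T} :=
  [set p | [&& p.1 \in X, p.2 \in Y & e p.1 p.2]].

Lemma bip_cross X Y : [disjoint X & Y] -> bip_subgraph e X Y (cross X Y).
Proof. by move=> dXY; split=> // p; rewrite inE => /and3P []. Qed.

Lemma bip_deg_le X Y F v : bip_subgraph e X Y F ->
  bip_deg F v <= ((v \in X) || (v \in Y)) * deg v.
Proof.
move=> [dXY inF]; rewrite /bip_deg degE.
have out_sub : #|[set y | (v, y) \in F]| <= (v \in X) * #|[set y | e v y]|.
  case vX: (v \in X); rewrite ?mul1n ?mul0n.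
    by apply/subset_leq_card/subsetP => y; rewrite !inE => /inF [].
  rewrite leqn0 cards_eq0; apply/eqP/setP => y; rewrite !inE.
  by apply/negP => /inF [] /=; rewrite vX.
have in_sub : #|[set x | (x, v) \in F]| <= (v \in Y) * #|[set y | e v y]|.
  case vY: (v \in Y); rewrite ?mul1n ?mul0n.
    apply/subset_leq_card/subsetP => x; rewrite !inE.
    by move=> /inF [_ _]; rewrite e_sym.
  rewrite leqn0 cards_eq0; apply/eqP/setP => x; rewrite !inE.
  by apply/negP => /inF [] /=; rewrite vY.
case vX: (v \in X); last by move: out_sub in_sub; rewrite vX; lia.
have vY : (v \in Y) = false by apply: disjointFr dXY _.
by move: out_sub in_sub; rewrite vX vY; lia.
Qed.

Lemma deg_lt_cls x : deg x < 2 ^ (cls x).+1.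
Proof. exact: trunc_log_ltn. Qed.

Lemma cls_le_deg x : 0 < deg x -> 2 ^ cls x <= deg x.
Proof. exact: trunc_logP. Qed.

Lemma bip_maxdeg_le X Y F i : bip_subgraph e X Y F ->
  {in X :|: Y, forall v, cls v <= i} -> bip_maxdeg F <= 2 ^ i.+1.
Proof.
move=> bipF cls_i; apply/bigmax_leqP => v _.
apply: leq_trans (bip_deg_le v bipF) _.
case vXY: ((v \in X) || (v \in Y)); rewrite ?mul0n // mul1n.
have cls_v : cls v <= i by apply: cls_i; rewrite inE.
apply: ltnW (leq_trans (deg_lt_cls v) _).
by rewrite leq_pexp2l.
Qed.

Definition low A i : {set T} := [set y | (y \notin A) && (cls y <= i)].

Lemma disjoint_layer_low A i : [disjoint layer A i & low A i].
Proof.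
rewrite -setI_eq0; apply/eqP/setP => x; rewrite !inE.
by apply/negP => /andP [/and3P [-> _ _]].
Qed.

Lemma card_cross_layer A i : #|cross (layer A i) (low A i)| = weight A i.
Proof.
rewrite card_set_sum /=.
rewrite -(pair_bigA _ (fun x y =>
  [&& x \in layer A i, y \in low A i & e x y] : nat)).
rewrite /weight [RHS]big_mkcond; apply: eq_bigr => x _.
case xL: (x \in layer A i); last by rewrite big1.
move: (xL); rewrite inE => /and3P [_ _ /eqP cls_x].
rewrite /outdeg [RHS]big_mkcond; apply: eq_bigr => y _.
by rewrite inE /down cls_x; case: (y \in A); case: (e x y); case: (cls y <= i).
Qed.

(* Each vertex of the layer has degree >= 2^i and sends >= deg / 40 edges
   into the other part, so the layer is small compared with the edges. *)
Lemma layer_small A i : #|layer A i| * 2 ^ i.+1 <= 80 * weight A i.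
Proof.
rewrite -sum_nat_const /weight big_distrr /=; apply: leq_sum => x.
rewrite inE => /and3P [_ /andP [deg_gt0 deg_le] /eqP cls_x].
have := cls_le_deg deg_gt0; rewrite cls_x expnS; move: (2 ^ i) => t; lia.
Qed.

Theorem dense_bipartite_piece : exists X Y F,
  [/\ bip_subgraph e X Y F,
       9 * n_arcs e <= 80 * max_cls.+1 * bip_edges F
     & #|X| * bip_maxdeg F <= 80 * bip_edges F].
Proof.
have [A heavy_cut] := exists_heavy_cut.
have [i rich] := exists_rich_layer (good_part_heavy heavy_cut).
have bipF := bip_cross (disjoint_layer_low A i).
exists (layer A i), (low A i), (cross (layer A i) (low A i)).
rewrite /bip_edges card_cross_layer; split => //.
apply: leq_trans (layer_small A i); rewrite leq_mul2l; apply/orP; right.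
apply: bip_maxdeg_le bipF _ => v.
by rewrite !inE => /orP [/and3P [_ _ /eqP ->] | /andP [_ ->]].
Qed.
End DyadicSplitting.

(* There are at most n^2 ordered pairs, so the average degree is at most n. *)
Lemma n_arcs_le_sq (T : finType) (e : rel T) : n_arcs e <= #|T| * #|T|.
Proof. by rewrite -card_prod; apply: max_card. Qed.

(* Reals are loaded only now: they rebind [^] on nat to Stdlib's power,
   whereas the combinatorial part above uses ssrnat's [expn]. *)
From Stdlib Require Import Reals Lra.

Section RealBounds.
Local Open Scope R_scope.

Lemma INR_le (m n : nat) : (m <= n)%nat -> INR m <= INR n.
Proof. by move/leP; apply: le_INR. Qed.

Lemma INR_expn (m k : nat) : INR (expn m k) = INR m ^ k.
Proof. by elim: k => // k IH; rewrite expnS mult_INR IH. Qed.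

Lemma ln_le_mono (x y : R) : 0 < x -> x <= y -> ln x <= ln y.
Proof.
move=> x_gt0 /Rle_lt_or_eq_dec [x_lt_y | <-]; last exact: Rle_refl.
exact/Rlt_le/ln_increasing.
Qed.

Lemma ln2_gt0 : 0 < ln 2.
Proof. by have := ln_lt_2; lra. Qed.

Lemma log2_pow_le (k : nat) (x : R) : 2 ^ k <= x -> INR k <= log2 x.
Proof.
move=> pow_le; have pow_gt0 : 0 < 2 ^ k by apply: pow_lt; lra.
have := ln_le_mono pow_gt0 pow_le; rewrite ln_pow; last lra.
have := ln2_gt0; rewrite /log2 => ln2_pos ln_le.
apply: (Rmult_le_reg_r (ln 2)) => //.
by rewrite /Rdiv Rmult_assoc Rinv_l; lra.
Qed.

Lemma log2_trunc_log (n : nat) :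
  (0 < n)%nat -> INR (trunc_log 2 n) <= log2 (INR n).
Proof.
move=> n_gt0; apply: log2_pow_le.
have := INR_le (trunc_logP (isT : (1 < 2)%nat) n_gt0).
by rewrite INR_expn (_ : INR 2 = 2) //=; lra.
Qed.

Lemma log2_ge8 (x : R) : 256 <= x -> 8 <= log2 x.
Proof.
move=> x_ge; have : 2 ^ 8 <= x by rewrite /=; lra.
by move/log2_pow_le; rewrite INR_IZR_INZ.
Qed.

(* The second inequality of Lemma 4.2: from the pigeonhole bound
   9 d n <= 80 (k + 1) e(G') with k <= L = log2 n >= 8 and |Y| <= n. *)
Lemma cross_degree_bound (y n d f k L : R) :
  0 <= y <= n -> 0 <= d -> 0 <= f -> 0 <= k <= L -> 8 <= L ->
  9 * (d * n) <= 80 * (k + 1) * f -> y * (d / (10 * L)) <= f.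
Proof.
move=> [y_ge0 y_le] d_ge0 f_ge0 [k_ge0 k_le] L_ge arcs_le.
have kf_le : k * f <= L * f by apply: Rmult_le_compat_r.
have dn_le : d * n <= 10 * L * f by nra.
have yd_le : y * d <= d * n by nra.
apply: (Rmult_le_reg_r (10 * L)); first lra.
replace (y * (d / (10 * L)) * (10 * L)) with (y * d) by (field; lra).
lra.
Qed.
End RealBounds.

Theorem lemma4p2 :
  exists d0 : R, forall d : R, (d0 <= d)%R ->
  forall (T : finType) (e : rel T),
    simple_graph e -> 0 < #|T| -> avg_degree e = d ->
    exists (X Y : {set T}) (F : {set T * T}),
      bip_subgraph e X Y F /\ F != set0 /\
      (INR #|X| * (INR (bip_maxdeg F) / 80) <= INR (bip_edges F))%R /\
      (INR #|Y| * (d / (10 * log2 (INR #|T|))) <= INR (bip_edges F))%R.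
Proof.
exists 256%R => d d_ge T e [e_sym e_irr] T_gt0 avg_d.
have [X [Y [F [bipF arcs_le X_le]]]] := dense_bipartite_piece e_sym e_irr.
have n_gt0 : (0 < INR #|T|)%R by apply/lt_0_INR/ltP.
(* 2e(G) = d n, and d <= n forces n >= 256. *)
have arcs_d : INR (n_arcs e) = (d * INR #|T|)%R.
  by rewrite -avg_d /avg_degree; field; lra.
have n_ge : (256 <= INR #|T|)%R.
  by have := INR_le (n_arcs_le_sq e); rewrite mult_INR arcs_d; nra.
(* G has edges, hence so does G'. *)
have arcs_gt0 : (0 < n_arcs e)%nat.
  apply/ltP/INR_lt; rewrite arcs_d (_ : INR 0 = 0%R) //.
  by apply: Rmult_lt_0_compat; lra.
have F_gt0 : (0 < #|F|)%nat.
  case: (posnP #|F|) => // F0; move: arcs_le.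
  by rewrite /bip_edges F0 muln0; lia.
exists X, Y, F; split=> //; split; first by rewrite -card_gt0.
split.
  have := INR_le X_le; rewrite !mult_INR (INR_IZR_INZ 80) /=; lra.
apply: (cross_degree_bound (k := INR (max_cls T))).
- by split; [exact: pos_INR | exact/INR_le/max_card].
- lra.
- exact: pos_INR.
- by split; [exact: pos_INR | exact: log2_trunc_log].
- exact: log2_ge8.
- have := INR_le arcs_le.
  rewrite !mult_INR (S_INR (max_cls T)) arcs_d.
  by rewrite (INR_IZR_INZ 80) (INR_IZR_INZ 9).
Qed.
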